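(* Let $\mathcal N':=\mathbb N\cup\{-1\}$ (with $\mathbb N=\{0,1,2,\dots\}$) and let $H=(\mathcal N',\mathcal N',p_1,p_2)$ be the two-player game with, for $k,\ell\ge 0$: $p_1(k,\ell)=\ell+1$ if $k=\ell+1$ and $0$ otherwise; $p_2(k,\ell)=k$ if $k=\ell$ and $0$ otherwise; and, for $k,\ell\ge -1$ and $k_0,\ell_0\ge 0$: $p_1(-1,\ell)=\ell+1$, $p_1(k_0,-1)=k_0$, $p_2(k,-1)=k$, $p_2(-1,\ell_0)=\ell_0$. With the pure belief structure, $\overline{GR}^{\omega}=(\{-1\},\{-1\})$ and $\overline{GR}^{\omega+1}=(\emptyset,\emptyset)$, so the closure ordinal of $\overline{GR}$ is $\omega+1$ and its outcome is $(\emptyset,\emptyset)$. Moreover $\overline{LR}^{\omega}=(\{-1\},\{-1\})$ and this is a fixpoint of $\overline{LR}$, so the outcome of $\overline{LR}$ is $(\{-1\},\{-1\})$.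
   Context: Restrictions of $H$ are pairs $(S_1,S_2)$ with $S_i\subseteq\mathcal N'$, ordered componentwise. Pure belief structure: the beliefs of player $i$ in a restriction $G=(S_1,S_2)$ are the strategies of the opponent in $G$, i.e. $S_{-i}$, and the expected payoff is the payoff. For $G=(S_1,S_2)$ and an opponent strategy $\mu_i$, $s_i\in BR_G(\mu_i)$ iff $p_i(s_i,\mu_i)\ge p_i(s_i',\mu_i)$ for all $s_i'\in S_i$. $GR(G)_i:=\{s_i\in\mathcal N'\mid\exists\mu_i\in S_{-i}: s_i\in BR_H(\mu_i)\}$; $LR(G)_i:=\{s_i\in\mathcal N'\mid\exists\mu_i\in S_{-i}: s_i\in BR_G(\mu_i)\}$; $\overline{T}(G):=T(G)\cap G$. Iterations: $T^0:=H$, $T^{\alpha+1}:=T(T^\alpha)$, $T^\beta:=\bigcap_{\alpha<\beta}T^\alpha$ for limit $\beta$; the closure ordinal is the least $\alpha$ with $T^{\alpha+1}=T^\alpha$ and the outcome is the corresponding iterate. *)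

From Stdlib Require Import ZArith.
Open Scope Z_scope.

Inductive Np : Type := Neg1 | Nat (n : nat).

Definition val (s : Np) : Z :=
  match s with Neg1 => -1 | Nat n => Z.of_nat n end.

Definition p1 (k l : Np) : Z :=
  match k, l with
  | Neg1, _ => val l + 1
  | Nat k0, Neg1 => Z.of_nat k0
  | Nat k0, Nat l0 => if Nat.eqb k0 (S l0) then Z.of_nat l0 + 1 else 0
  end.

Definition p2 (k l : Np) : Z :=
  match k, l with
  | _, Neg1 => val k
  | Neg1, Nat l0 => Z.of_nat l0
  | Nat k0, Nat l0 => if Nat.eqb k0 l0 then Z.of_nat k0 else 0
  end.

Definition restr : Type := ((Np -> Prop) * (Np -> Prop))%type.
Definition H : restr := (fun _ => True, fun _ => True).

(* best responses in a restriction G (pure beliefs: opponent strategy mu) *)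
Definition BR1 (G : restr) (mu s : Np) : Prop :=
  forall s', fst G s' -> p1 s' mu <= p1 s mu.
Definition BR2 (G : restr) (mu s : Np) : Prop :=
  forall s', snd G s' -> p2 mu s' <= p2 mu s.

Definition GR (G : restr) : restr :=
  (fun s => exists mu, snd G mu /\ BR1 H mu s,
   fun s => exists mu, fst G mu /\ BR2 H mu s).
Definition LR (G : restr) : restr :=
  (fun s => exists mu, snd G mu /\ BR1 G mu s,
   fun s => exists mu, fst G mu /\ BR2 G mu s).

Definition bar (T : restr -> restr) (G : restr) : restr :=
  (fun s => fst (T G) s /\ fst G s, fun s => snd (T G) s /\ snd G s).

Fixpoint iterF (T : restr -> restr) (n : nat) : restr :=
  match n with O => H | S m => T (iterF T m) end.
Definition iterOmega (T : restr -> restr) : restr :=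
  (fun s => forall n, fst (iterF T n) s, fun s => forall n, snd (iterF T n) s).
Fixpoint iterOmegaPlus (T : restr -> restr) (k : nat) : restr :=
  match k with O => iterOmega T | S m => T (iterOmegaPlus T m) end.

Definition singNeg1 : restr := (fun s => s = Neg1, fun s => s = Neg1).
Definition emptyR : restr := (fun _ => False, fun _ => False).

From Stdlib Require Import ZArith.
From Stdlib Require Import Lia Arith FunctionalExtensionality PropExtensionality.

(* After n rounds of either operator the survivors are -1 together with the
   k with 2k >= n for player 1 and the l with 2l+1 >= n for player 2.  As long
   as -1 survives and the opponent's set is unbounded, the belief -1 admits no
   best reply (a larger natural number always does better), while against a
   natural number l player 1's best replies are -1 and l+1, and against k
   player 2's are -1 and k (and everything when k = 0).  So each round strips
   the least natural number from one player, alternately, and only -1 survives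
   all rounds.  At stage omega the sets are bounded: in H the belief -1 still
   has no best reply, so GR empties both sets, whereas inside ({-1},{-1}) the
   strategy -1 is a best reply to -1, so LR stabilises. *)

Lemma restr_ext (G G' : restr) :
  (forall s, fst G s <-> fst G' s) -> (forall s, snd G s <-> snd G' s) -> G = G'.
Proof.
  destruct G as [a b], G' as [c d]; simpl; intros E1 E2.
  f_equal; extensionality s; apply propositional_extensionality; auto.
Qed.

Definition unbounded (P : Np -> Prop) : Prop :=
  forall N, exists m, (N <= m)%nat /\ P (Nat m).

Definition rich (G : restr) : Prop :=
  fst G Neg1 /\ snd G Neg1 /\ unbounded (fst G) /\ unbounded (snd G).

Lemma rich_H : rich H.
Proof. repeat split; intro N; exists N; split; simpl; auto. Qed.

Lemma p1_le_succ s l : p1 s (Nat l) <= Z.of_nat l + 1.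
Proof. destruct s; simpl; [lia | destruct Nat.eqb; lia]. Qed.

Lemma p2_le k s : p2 (Nat k) s <= Z.of_nat k.
Proof. destruct s; simpl; [lia | destruct (Nat.eqb_spec k n); lia]. Qed.

Lemma p2_ge0 k s : 0 <= p2 (Nat k) s.
Proof. destruct s; simpl; [lia | destruct (Nat.eqb_spec k n); lia]. Qed.

Lemma not_BR1_Neg1 G s : unbounded (fst G) -> ~ BR1 G Neg1 s.
Proof.
  intros Hu HB.
  destruct (Hu (S (match s with Neg1 => O | Nat k => k end))) as [m [Hm Gm]].
  specialize (HB _ Gm). destruct s; simpl in *; lia.
Qed.

Lemma not_BR2_Neg1 G s : unbounded (snd G) -> ~ BR2 G Neg1 s.
Proof.
  intros Hu HB.
  destruct (Hu (S (match s with Neg1 => O | Nat l => l end))) as [m [Hm Gm]].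
  specialize (HB _ Gm). destruct s; simpl in *; lia.
Qed.

Lemma BR1_Nat_iff G l s :
  fst G Neg1 -> BR1 G (Nat l) s <-> s = Neg1 \/ s = Nat (S l).
Proof.
  intros G1; split.
  - intros HB. specialize (HB Neg1 G1); simpl in HB.
    destruct s as [|k]; auto; simpl in HB.
    destruct (Nat.eqb_spec k (S l)); [subst; auto | lia].
  - intros Hs s' _. pose proof (p1_le_succ s' l).
    destruct Hs as [-> | ->]; simpl; [lia |]. rewrite Nat.eqb_refl. lia.
Qed.

Lemma BR2_Nat_iff G k s :
  snd G Neg1 -> BR2 G (Nat k) s <-> k = O \/ s = Neg1 \/ s = Nat k.
Proof.
  intros G1; split.
  - intros HB. specialize (HB Neg1 G1); simpl in HB.
    destruct s as [|l]; auto; simpl in HB.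
    destruct (Nat.eqb_spec k l); [subst; auto | left; lia].
  - intros Hs s' _. pose proof (p2_le k s').
    destruct Hs as [-> | [-> | ->]].
    + pose proof (p2_ge0 0 s). lia.
    + change (p2 (Nat k) Neg1) with (Z.of_nat k). lia.
    + replace (p2 (Nat k) (Nat k)) with (Z.of_nat k)
        by (simpl; now rewrite Nat.eqb_refl). lia.
Qed.

Definition best_replies (B G : restr) : restr :=
  (fun s => exists mu, snd G mu /\ BR1 B mu s,
   fun s => exists mu, fst G mu /\ BR2 B mu s).

Definition survivors (n : nat) : restr :=
  (fun s => s = Neg1 \/ exists k, s = Nat k /\ (n <= 2 * k)%nat,
   fun s => s = Neg1 \/ exists l, s = Nat l /\ (n <= 2 * l + 1)%nat).

Lemma survivors_0 : survivors 0 = H.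
Proof.
  apply restr_ext; intros [|m]; simpl; split; auto;
    intros _; right; exists m; split; auto; lia.
Qed.

Lemma bar_survivors T B n :
  rich B -> T (survivors n) = best_replies B (survivors n) ->
  bar T (survivors n) = survivors (S n).
Proof.
  intros [B1 [B2 [Bu1 Bu2]]] ET. unfold bar; rewrite ET.
  apply restr_ext; intros s; simpl; split.
  - intros [[[|l] [Hl HB]] Hs]; [now apply not_BR1_Neg1 in HB |].
    apply BR1_Nat_iff in HB; auto.
    destruct Hl as [? | [l' [[= <-] Hl]]]; [discriminate |].
    destruct HB as [-> | ->]; [now left |]. right; exists (S l); split; auto; lia.
  - intros Hs; split.
    + destruct Hs as [-> | [k [-> Hk]]].
      * exists (Nat n); split; [right; exists n; split; auto; lia |].
        apply BR1_Nat_iff; auto.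
      * exists (Nat (k - 1)); split; [right; exists (k - 1)%nat; split; auto; lia |].
        apply BR1_Nat_iff; auto. right; f_equal; lia.
    + destruct Hs as [-> | [k [-> Hk]]]; [now left | right; exists k; split; auto; lia].
  - intros [[[|k] [Hk HB]] Hs]; [now apply not_BR2_Neg1 in HB |].
    apply BR2_Nat_iff in HB; auto.
    destruct Hk as [? | [k' [[= <-] Hk]]]; [discriminate |].
    destruct Hs as [-> | [l [-> Hl]]]; [now left |]. right; exists l; split; auto.
    destruct HB as [-> | [? | [= ->]]]; [lia | discriminate | lia].
  - intros Hs; split.
    + destruct Hs as [-> | [l [-> Hl]]].
      * exists (Nat n); split; [right; exists n; split; auto; lia |].
        apply BR2_Nat_iff; auto.
      * exists (Nat l); split; [right; exists l; split; auto; lia |].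
        apply BR2_Nat_iff; auto.
    + destruct Hs as [-> | [l [-> Hl]]]; [now left | right; exists l; split; auto; lia].
Qed.

Lemma iterF_bar_survivors T (B : nat -> restr) :
  (forall n, rich (B n)) ->
  (forall n, T (survivors n) = best_replies (B n) (survivors n)) ->
  forall n, iterF (bar T) n = survivors n.
Proof.
  intros HB ET n; induction n as [|n IH]; simpl.
  - symmetry; apply survivors_0.
  - rewrite IH; apply (bar_survivors T (B n)); auto.
Qed.

Lemma iterF_bar_GR n : iterF (bar GR) n = survivors n.
Proof. now apply (iterF_bar_survivors GR (fun _ => H)); [intros; apply rich_H |]. Qed.

Lemma rich_survivors n : rich (survivors n).
Proof.
  repeat split; try now left.
  all: intro N; exists (N + n)%nat; split; [lia | right; exists (N + n)%nat; split; auto; lia].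
Qed.

Lemma iterF_bar_LR n : iterF (bar LR) n = survivors n.
Proof. now apply (iterF_bar_survivors LR survivors); [apply rich_survivors |]. Qed.

Lemma survivors_S_neq n : survivors (S n) <> survivors n.
Proof.
  intros E. destruct (Nat.Even_or_Odd n) as [[j Hj] | [j Hj]].
  - assert (Hin : fst (survivors n) (Nat j)) by (right; exists j; split; auto; lia).
    rewrite <- E in Hin. destruct Hin as [? | [k [[= <-] Hk]]]; [discriminate | lia].
  - assert (Hin : snd (survivors n) (Nat j)) by (right; exists j; split; auto; lia).
    rewrite <- E in Hin. destruct Hin as [? | [l [[= <-] Hl]]]; [discriminate | lia].
Qed.

Lemma iterOmega_survivors T :
  (forall n, iterF T n = survivors n) -> iterOmega T = singNeg1.
Proof.
  intros ET; unfold iterOmega.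
  apply restr_ext; intros s; simpl; setoid_rewrite ET; split.
  1, 3: intros Hs; destruct s as [|m]; auto;
        destruct (Hs (2 * m + 2)%nat) as [? | [m' [[= <-] Hm]]]; [discriminate | lia].
  all: intros -> n; now left.
Qed.

Lemma bar_GR_singNeg1 : bar GR singNeg1 = emptyR.
Proof.
  destruct rich_H as [_ [_ [Hu1 Hu2]]].
  apply restr_ext; intros s; simpl; split; try tauto.
  - intros [[mu [-> HB]] _]. exact (not_BR1_Neg1 _ _ Hu1 HB).
  - intros [[mu [-> HB]] _]. exact (not_BR2_Neg1 _ _ Hu2 HB).
Qed.

Lemma bar_LR_singNeg1 : bar LR singNeg1 = singNeg1.
Proof.
  apply restr_ext; intros s; simpl; split; try tauto;
    intros ->; split; auto; exists Neg1; split; auto; intros s' ->; lia.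
Qed.

Lemma bar_emptyR T : bar T emptyR = emptyR.
Proof. apply restr_ext; intros s; simpl; tauto. Qed.

Theorem mainTheorem13 :
  iterOmega (bar GR) = singNeg1 /\
  iterOmegaPlus (bar GR) 1 = emptyR /\
  (forall n : nat, iterF (bar GR) (S n) <> iterF (bar GR) n) /\
  iterOmegaPlus (bar GR) 1 <> iterOmega (bar GR) /\
  iterOmegaPlus (bar GR) 2 = iterOmegaPlus (bar GR) 1 /\
  iterOmega (bar LR) = singNeg1 /\
  bar LR (iterOmega (bar LR)) = iterOmega (bar LR).
Proof.
  assert (GRomega : iterOmega (bar GR) = singNeg1)
    by exact (iterOmega_survivors _ iterF_bar_GR).
  assert (LRomega : iterOmega (bar LR) = singNeg1)
    by exact (iterOmega_survivors _ iterF_bar_LR).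
  assert (GRomega1 : iterOmegaPlus (bar GR) 1 = emptyR)
    by (simpl; rewrite GRomega; apply bar_GR_singNeg1).
  repeat split; auto.
  - intros n. rewrite !iterF_bar_GR. apply survivors_S_neq.
  - rewrite GRomega1, GRomega. intros E.
    assert (Hin : snd singNeg1 Neg1) by reflexivity. now rewrite <- E in Hin.
  - simpl in GRomega1 |- *. rewrite GRomega1. apply bar_emptyR.
  - rewrite LRomega. apply bar_LR_singNeg1.
Qed.
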